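(* Let $n\geq3$. Then $\Gamma_2(B_n(\mathbb{K}))=\Gamma_i(B_n(\mathbb{K}))$ for all $i\geq3$, and this subgroup equals the normal closure of $\sigma_2^{-1}\sigma_1$ in $B_n(\mathbb{K})$; it is nontrivial, so $B_n(\mathbb{K})$ is not residually nilpotent.
   Context: $\mathbb{K}$ is the Klein bottle. $B_n(\mathbb{K})$ has the presentation with generators $a,b,\sigma_1,\ldots,\sigma_{n-1}$ and relations: $\sigma_i\sigma_{i+1}\sigma_i=\sigma_{i+1}\sigma_i\sigma_{i+1}$; $\sigma_j\sigma_i=\sigma_i\sigma_j$ if $|i-j|\geq2$; $a\sigma_j=\sigma_ja$ and $b\sigma_j=\sigma_jb$ for $j\geq2$; $b^{-1}\sigma_1a=\sigma_1a\sigma_1b^{-1}\sigma_1$; $a(\sigma_1a\sigma_1)=(\sigma_1a\sigma_1)a$; $b(\sigma_1^{-1}b\sigma_1)=(\sigma_1^{-1}b\sigma_1^{-1})b$; $\sigma_1\cdots\sigma_{n-2}\sigma_{n-1}^2\sigma_{n-2}\cdots\sigma_1=ba^{-1}b^{-1}a^{-1}$. $\Gamma_1=G$, $\Gamma_{i+1}=[\Gamma_i,G]$. *)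

(* B_n(K) is given by its presentation:
   elements are words in the generators, equality is the congruence generated
   by free cancellation and the defining relations. *)
From mathcomp Require Import all_boot.
Set Implicit Arguments. Unset Strict Implicit. Unset Printing Implicit Defensive.

(* Generators a, b, sigma_{i+1} for i : 'I_(n-1). *)
Inductive gen (n : nat) : Type :=
| GA : gen n
| GB : gen n
| GS : 'I_n.-1 -> gen n.

(* letter = generator with exponent (true = +1, false = -1) *)
Definition letter n := (gen n * bool)%type.
Definition word n := seq (letter n).

Definition winv n (w : word n) : word n := rev (map (fun x => (x.1, ~~ x.2)) w).

Definition wa n : word n := [:: (GA n, true)].
Definition wb n : word n := [:: (GB n, true)].
Definition ws n (i : 'I_n.-1) : word n := [:: (GS i, true)].

Definition sigprod n : word n := [seq (GS i, true) | i <- enum 'I_n.-1].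

Inductive krel (n : nat) : word n -> word n -> Prop :=
| kr_braid (i j : 'I_n.-1) : val j = (val i).+1 ->
    krel (ws i ++ ws j ++ ws i) (ws j ++ ws i ++ ws j)
| kr_far (i j : 'I_n.-1) : 2 <= val i - val j \/ 2 <= val j - val i ->
    krel (ws j ++ ws i) (ws i ++ ws j)
| kr_a (j : 'I_n.-1) : 1 <= val j -> krel (wa n ++ ws j) (ws j ++ wa n)
| kr_b (j : 'I_n.-1) : 1 <= val j -> krel (wb n ++ ws j) (ws j ++ wb n)
| kr_1 (s1 : 'I_n.-1) : val s1 = 0 ->
    krel (winv (wb n) ++ ws s1 ++ wa n)
         (ws s1 ++ wa n ++ ws s1 ++ winv (wb n) ++ ws s1)
| kr_2 (s1 : 'I_n.-1) : val s1 = 0 ->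
    krel (wa n ++ (ws s1 ++ wa n ++ ws s1)) ((ws s1 ++ wa n ++ ws s1) ++ wa n)
| kr_3 (s1 : 'I_n.-1) : val s1 = 0 ->
    krel (wb n ++ (winv (ws s1) ++ wb n ++ ws s1))
         ((winv (ws s1) ++ wb n ++ winv (ws s1)) ++ wb n)
| kr_4 : krel (sigprod n ++ rev (sigprod n))
              (wb n ++ winv (wa n) ++ winv (wb n) ++ winv (wa n)).

Inductive beq (n : nat) : word n -> word n -> Prop :=
| beq_refl w : beq w w
| beq_sym u v : beq u v -> beq v u
| beq_trans u v w : beq u v -> beq v w -> beq u w
| beq_free (u v : word n) (x : letter n) :
    beq (u ++ [:: x; (x.1, ~~ x.2)] ++ v) (u ++ v)
| beq_rel (u v l r : word n) : krel l r -> beq (u ++ l ++ v) (u ++ r ++ v).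

Inductive gsub (n : nat) (S : word n -> Prop) : word n -> Prop :=
| gsub_base w : S w -> gsub S w
| gsub_one : gsub S [::]
| gsub_mul u v : gsub S u -> gsub S v -> gsub S (u ++ v)
| gsub_inv u : gsub S u -> gsub S (winv u)
| gsub_eq u v : beq u v -> gsub S u -> gsub S v.

Definition comm n (x g : word n) : word n := winv x ++ winv g ++ x ++ g.

(* lcs k = Gamma_{k+1} *)
Fixpoint lcs (n k : nat) : word n -> Prop :=
  match k with
  | 0 => fun _ => True
  | k'.+1 => @gsub n (fun w => exists x g, lcs k' x /\ w = comm x g)
  end.

Definition Gamma (n i : nat) : word n -> Prop := @lcs n i.-1.

Definition nclosure n (r : word n) : word n -> Prop :=
  gsub (fun w => exists g, w = winv g ++ r ++ g).

From mathcomp Require Import all_boot.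
From Stdlib Require Import Setoid Morphisms.
From mathcomp Require Import zify.
Set Implicit Arguments. Unset Strict Implicit.

(** Let d = σ2⁻¹σ1 and N its normal closure.  By the braid relation
    d = [σ1⁻¹, σ2⁻¹] lies in Γ2, and d is a conjugate of [d⁻¹, σ2⁻¹], so it
    lies in Γ3; hence N ⊆ Γ3.  Modulo N, σ2 = σ1, and the braid and far
    commutation relations propagate this to σ_i = σ1 for every i; the
    relations involving a and b then force σ1² = 1 and [a, b] = 1, so
    B_n(K)/N is abelian and Γ2 ⊆ N.  Finally d ≠ 1: the map to permutations of
    ℕ sending a, b to 1 and σ_i to the transposition (i-1 i) sends d to a
    3-cycle. *)

Section Words.
Variable n : nat.
Implicit Types u v w : word n.

Lemma winv_cat u v : winv (u ++ v) = winv v ++ winv u.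
Proof. by rewrite /winv map_cat rev_cat. Qed.

Lemma winvK : involutive (@winv n).
Proof.
move=> u; rewrite /winv map_rev revK -map_comp.
by elim: u => //= [[g b] u ->]; rewrite negbK.
Qed.

Lemma beq_ctx u v w1 w2 : beq u v -> beq (w1 ++ u ++ w2) (w1 ++ v ++ w2).
Proof.
elim=> {u v} [u | u v _ | u v w _ IHuv _ IHvw | u v x | u v l r huv].
- exact: beq_refl.
- exact: beq_sym.
- exact: beq_trans IHuv IHvw.
- by have := beq_free (w1 ++ u) (v ++ w2) x; rewrite -!catA.
- by have := beq_rel (w1 ++ u) (v ++ w2) huv; rewrite -!catA.
Qed.

Lemma krel_beq l r : krel l r -> beq (n:=n) l r.
Proof. by move=> /(beq_rel [::] [::]); rewrite /= !cats0. Qed.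

End Words.

Add Parametric Relation n : (word n) (@beq n)
  reflexivity proved by (@beq_refl n) symmetry proved by (@beq_sym n)
  transitivity proved by (@beq_trans n) as beq_setoid.

#[local] Hint Resolve beq_refl : core.

Add Parametric Morphism n : (@cat (letter n))
  with signature (@beq n) ==> (@beq n) ==> (@beq n) as cat_beq.
Proof.
move=> u u' hu v v' hv.
have := beq_ctx [::] v hu; have := beq_ctx u' [::] hv; rewrite /= !cats0.
by move=> h2 h1; apply: beq_trans h1 h2.
Qed.

Add Parametric Morphism n (x : letter n) : (cons x)
  with signature (@beq n) ==> (@beq n) as cons_beq.
Proof. by move=> u v /(beq_ctx [:: x] [::]); rewrite !cats0. Qed.

Section Cancellation.
Variable n : nat.
Implicit Types u v : word n.

Lemma beq_catwV u : beq (u ++ winv u) [::].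
Proof.
elim: u => [|x u IH] /=; first reflexivity.
rewrite /winv /= rev_cons -cats1 -/(winv u) catA IH.
exact: (beq_free [::] [::] x).
Qed.

Lemma beq_catVw u : beq (winv u ++ u) [::].
Proof. by have := beq_catwV (winv u); rewrite winvK. Qed.

Lemma beq_catKw u v : beq (winv u ++ (u ++ v)) v.
Proof. by rewrite catA beq_catVw. Qed.

Lemma beq_catKVw u v : beq (u ++ (winv u ++ v)) v.
Proof. by rewrite catA beq_catwV. Qed.

Lemma beq_catwK u v : beq ((v ++ u) ++ winv u) v.
Proof. by rewrite -catA beq_catwV cats0. Qed.

Lemma beq_winv u v : beq u v -> beq (winv u) (winv v).
Proof.
move=> huv; have huVv : beq (winv u ++ v) [::] by rewrite -huv beq_catVw.
by rewrite -(beq_catwK v (winv u)) huVv.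
Qed.

End Cancellation.

Add Parametric Morphism n : (@winv n)
  with signature (@beq n) ==> (@beq n) as winv_beq_morph.
Proof. exact: beq_winv. Qed.

Class is_normal n (P : word n -> Prop) := {
  normal_beq {u v} : beq u v -> P u -> P v;
  normal_nil : P [::];
  normal_cat {u v} : P u -> P v -> P (u ++ v);
  normal_winv {u} : P u -> P (winv u);
  normal_conj g {u} : P u -> P (winv g ++ u ++ g) }.

Definition eqmod n (P : word n -> Prop) (u v : word n) := P (winv u ++ v).

Definition commute_mod n (P : word n -> Prop) (u v : word n) :=
  eqmod P (u ++ v) (v ++ u).

Section Eqmod.
Variables (n : nat) (P : word n -> Prop).
Context {HP : is_normal P}.
Implicit Types u v w : word n.

Lemma eqmod_refl u : eqmod P u u.
Proof. exact: normal_beq (beq_sym (beq_catVw u)) normal_nil. Qed.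

Lemma eqmod_sym u v : eqmod P u v -> eqmod P v u.
Proof. by rewrite /eqmod => /normal_winv; rewrite winv_cat winvK. Qed.

Lemma eqmod_trans u v w : eqmod P u v -> eqmod P v w -> eqmod P u w.
Proof.
rewrite /eqmod => huv hvw; apply: normal_beq (normal_cat huv hvw).
by rewrite -catA beq_catKVw.
Qed.

End Eqmod.

Add Parametric Relation n (P : word n -> Prop) (HP : is_normal P) :
  (word n) (eqmod P)
  reflexivity proved by (eqmod_refl (P:=P)) symmetry proved by (@eqmod_sym n P HP)
  transitivity proved by (@eqmod_trans n P HP) as eqmod_setoid.

#[local] Hint Extern 0 (eqmod _ _ _) => reflexivity : core.

Add Parametric Morphism n (P : word n -> Prop) (HP : is_normal P) : P
  with signature (@beq n) ==> iff as normal_beq_morph.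
Proof.
move=> u v huv; split; first exact: normal_beq.
by apply: normal_beq; symmetry.
Qed.

Add Parametric Morphism n (P : word n -> Prop) (HP : is_normal P) : (eqmod P)
  with signature (@beq n) ==> (@beq n) ==> iff as eqmod_beq_morph.
Proof. by move=> u u' hu v v' hv; rewrite /eqmod hu hv; reflexivity. Qed.

Add Parametric Morphism n (P : word n -> Prop) (HP : is_normal P) :
  (@cat (letter n)) with signature (eqmod P) ==> (eqmod P) ==> (eqmod P) as cat_eqmod.
Proof.
rewrite /eqmod => u u' hu v v' hv; rewrite winv_cat.
apply: normal_beq (normal_cat (normal_conj v hu) hv).
by rewrite -!catA beq_catKVw.
Qed.

Add Parametric Morphism n (P : word n -> Prop) (HP : is_normal P) (x : letter n) :
  (cons x) with signature (eqmod P) ==> (eqmod P) as cons_eqmod.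
Proof.
by move=> u v huv; change (eqmod P ([:: x] ++ u) ([:: x] ++ v)); rewrite huv.
Qed.

Add Parametric Morphism n (P : word n -> Prop) (HP : is_normal P) : (@winv n)
  with signature (eqmod P) ==> (eqmod P) as winv_eqmod.
Proof.
move=> u v /eqmod_sym; rewrite /eqmod => hvu.
apply: normal_beq (normal_conj (winv u) hvu).
by rewrite winvK beq_catwK.
Qed.

Add Parametric Morphism n (P : word n -> Prop) (HP : is_normal P) :
  (commute_mod P) with signature (eqmod P) ==> (eqmod P) ==> iff as commute_mod_eqmod.
Proof. by move=> u u' hu v v' hv; rewrite /commute_mod hu hv; reflexivity. Qed.

Lemma beq_eqmod n (P : word n -> Prop) {HP : is_normal P} u v :
  beq u v -> eqmod P u v.
Proof. by move=> ->. Qed.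

Section Quotient.
Variables (n : nat) (P : word n -> Prop).
Context {HP : is_normal P}.
Implicit Types u v w : word n.

Lemma eqmod_catl w u v : eqmod P (w ++ u) (w ++ v) -> eqmod P u v.
Proof. by move=> h; rewrite -(beq_catKw w u) h beq_catKw. Qed.

Lemma eqmod_catr w u v : eqmod P (u ++ w) (v ++ w) -> eqmod P u v.
Proof. by move=> h; rewrite -(beq_catwK w u) h beq_catwK. Qed.

Lemma commute_mod_sym u v : commute_mod P u v -> commute_mod P v u.
Proof. by rewrite /commute_mod => h; symmetry. Qed.

Lemma commute_mod_winvl u v : commute_mod P u v -> commute_mod P (winv u) v.
Proof.
rewrite /commute_mod => h.
transitivity (winv u ++ (v ++ u) ++ winv u); first by rewrite beq_catwK.
by rewrite -h -catA beq_catKw.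
Qed.

Lemma commute_mod_catr u v w :
  commute_mod P u v -> commute_mod P u w -> commute_mod P u (v ++ w).
Proof. by rewrite /commute_mod => huv huw; rewrite catA huv -catA huw catA. Qed.

Lemma commute_mod_catl u v w :
  commute_mod P u w -> commute_mod P v w -> commute_mod P (u ++ v) w.
Proof.
by move=> huw hvw; apply/commute_mod_sym/commute_mod_catr; apply: commute_mod_sym.
Qed.

Lemma commute_mod_signs g h b c :
  commute_mod P [:: (g, true)] [:: (h, true)] ->
  commute_mod P [:: (g, b)] [:: (h, c)].
Proof.
have winv1 (k : gen n) : [:: (k, false)] = winv [:: (k, true)] by [].
move=> hgh; case: b; case: c; rewrite ?winv1 //.
- by apply/commute_mod_sym/commute_mod_winvl/commute_mod_sym.
- exact: commute_mod_winvl.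
- by apply/commute_mod_winvl/commute_mod_sym/commute_mod_winvl/commute_mod_sym.
Qed.

Lemma eqmod_swap x y t :
  commute_mod P [:: x] [:: y] -> eqmod P (x :: y :: t) (y :: x :: t).
Proof.
rewrite /commute_mod => hxy.
by rewrite -[x :: _]cat1s -[y :: _]cat1s !catA hxy.
Qed.

Lemma eqmod_braid u v :
  commute_mod P u v -> eqmod P (u ++ v ++ u) (v ++ u ++ v) -> eqmod P u v.
Proof.
rewrite /commute_mod => huv h; apply: (@eqmod_catr v); apply: (@eqmod_catl u).
transitivity (u ++ v ++ u); first by rewrite huv.
by rewrite h catA -huv -catA.
Qed.

Hypothesis gens_commute : forall g h : gen n,
  commute_mod P [:: (g, true)] [:: (h, true)].

Lemma commute_mod_all u v : commute_mod P u v.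
Proof.
have letter_word x w : commute_mod P [:: x] w.
  case: x => g b; elim: w => [|[h c] w IH]; first by rewrite /commute_mod cats0.
  rewrite -[_ :: w]cat1s; apply: commute_mod_catr => //.
  exact/commute_mod_signs/gens_commute.
elim: u => [|x u IH]; first by rewrite /commute_mod cats0.
by rewrite -[x :: u]cat1s; apply: commute_mod_catl.
Qed.

Lemma comm_normal x g : P (comm x g).
Proof.
have hgx : eqmod P (winv g ++ x) (x ++ winv g) by apply: commute_mod_all.
change (eqmod P [::] (comm x g)); symmetry.
by rewrite /comm (catA (winv g)) hgx -catA beq_catKw beq_catVw.
Qed.

End Quotient.

Section LowerCentralSeries.
Variable n : nat.
Implicit Types (S T P : word n -> Prop) (u v w x g : word n).

Lemma gsub_sub S T :
  (forall w, S w -> gsub T w) -> forall w, gsub S w -> gsub T w.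
Proof.
move=> sST w; elim=> {w} [w /sST // | | u v _ hu _ hv | u _ hu | u v huv _ hu].
- exact: gsub_one.
- exact: gsub_mul.
- exact: gsub_inv.
- exact: gsub_eq huv hu.
Qed.

Lemma gsub_normal S P {HP : is_normal P} :
  (forall w, S w -> P w) -> forall w, gsub S w -> P w.
Proof.
move=> sSP w; elim=> {w} [w /sSP // | | u v _ hu _ hv | u _ hu | u v huv _ hu].
- exact: normal_nil.
- exact: normal_cat.
- exact: normal_winv.
- exact: normal_beq huv hu.
Qed.

Global Instance nclosure_normal (r : word n) : is_normal (nclosure r).
Proof.
split=> [u v | | u v | u | h u]; [exact: gsub_eq | exact: gsub_one
  | exact: gsub_mul | exact: gsub_inv | elim=> {u}].
- move=> _ [g ->]; apply: gsub_base; exists (g ++ h).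
  by rewrite winv_cat -!catA.
- exact: gsub_eq (beq_sym (beq_catVw h)) (gsub_one _).
- move=> u v _ hu _ hv; apply: gsub_eq (gsub_mul hu hv).
  by rewrite -!catA beq_catKVw.
- move=> u _ hu; have := gsub_inv hu.
  by rewrite !winv_cat winvK catA.
- by move=> u v huv _; apply: gsub_eq; rewrite huv.
Qed.

Lemma lcs_succ_sub k w : lcs k.+1 w -> lcs (n:=n) k w.
Proof.
elim: k w => [//|k IH] w /=.
apply: gsub_sub => _ [x [g [hx ->]]]; apply: gsub_base.
by exists x, g; split => //; apply: IH.
Qed.

Lemma lcs_le k m w : k <= m -> lcs m w -> lcs (n:=n) k w.
Proof.
move/subnK <-; elim: (m - k) w => [//|i IH] w h.
by apply: IH; apply: lcs_succ_sub.
Qed.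

Lemma lcs_conj k x g : lcs k.+1 x -> lcs (n:=n) k.+1 (winv g ++ x ++ g).
Proof.
move=> hx; apply: (gsub_eq (u := x ++ comm x g)).
  by rewrite /comm beq_catKVw.
apply: gsub_mul => //; apply: gsub_base.
by exists x, g; split => //; apply: lcs_succ_sub.
Qed.

Lemma lcs_succ_stable :
  (forall w, lcs 1 w -> lcs 2 w) -> forall k w, lcs k.+1 w -> lcs (n:=n) k.+2 w.
Proof.
move=> lcs12; elim=> [//|k IH] w /=.
apply: gsub_sub => _ [x [g [hx ->]]]; apply: gsub_base.
by exists x, g; split => //; apply: IH.
Qed.

Lemma Gamma_stable :
  (forall w, Gamma 2 w -> Gamma 3 w) ->
  forall i, 2 <= i -> forall w, Gamma 2 w <-> Gamma (n:=n) i w.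
Proof.
move=> G23 [|[|i]] // _ w; change (lcs 1 w <-> lcs i.+1 w).
split; last exact: lcs_le.
by elim: i => [//|i IH] /IH; apply: lcs_succ_stable.
Qed.

End LowerCentralSeries.

Definition swapn (i k : nat) : nat :=
  if k == i then i.+1 else if k == i.+1 then i else k.

Lemma swapnK i : involutive (swapn i).
Proof. by move=> k; rewrite /swapn; do ![case: ifP]; lia. Qed.

Lemma swapn_braid i k :
  swapn i (swapn i.+1 (swapn i k)) = swapn i.+1 (swapn i (swapn i.+1 k)).
Proof. by rewrite /swapn; do ![case: ifP]; lia. Qed.

Lemma swapn_far i j k :
  2 <= i - j \/ 2 <= j - i -> swapn i (swapn j k) = swapn j (swapn i k).
Proof. by rewrite /swapn; do ![case: ifP]; lia. Qed.

Section PermutationRepresentation.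
Variable n : nat.
Implicit Types (x : letter n) (u v : word n).

Definition perm_letter x : nat -> nat :=
  if x.1 is GS i then swapn (val i) else id.

Definition perm_word u : nat -> nat := foldr (fun x f => perm_letter x \o f) id u.

Lemma perm_word_cat u v k : perm_word (u ++ v) k = perm_word u (perm_word v k).
Proof. by elim: u => //= x u ->. Qed.

Lemma perm_letterK x : involutive (perm_letter x).
Proof. by rewrite /perm_letter; case: x.1 => //= i; apply: swapnK. Qed.

Lemma perm_word_cat_rev u k : perm_word (u ++ rev u) k = k.
Proof.
elim: u k => // x u IH k.
by rewrite rev_cons -cats1 catA perm_word_cat /= IH perm_letterK.
Qed.

Lemma krel_perm l r : krel l r -> perm_word l =1 perm_word r.
Proof.
case=> [i j hij | i j hij | j _ | j _ | i _ | i _ | i _ | ] k;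
  rewrite /perm_word /perm_letter /= ?swapnK //.
- by rewrite hij swapn_braid.
- exact/esym/swapn_far.
- exact: perm_word_cat_rev.
Qed.

Lemma beq_perm u v : beq u v -> perm_word u =1 perm_word v.
Proof.
elim=> {u v} [// | u v _ IH k | u v w _ IHuv _ IHvw k | u v x k | u v l r hlr k].
- by rewrite IH.
- by rewrite IHuv IHvw.
- by rewrite !perm_word_cat /= perm_letterK.
- by rewrite !perm_word_cat (krel_perm hlr).
Qed.

End PermutationRepresentation.

Lemma beq_cancel_pos n (g : gen n) t : beq ((g, true) :: (g, false) :: t) t.
Proof. exact: (beq_free [::] t (g, true)). Qed.

Lemma beq_cancel_neg n (g : gen n) t : beq ((g, false) :: (g, true) :: t) t.
Proof. exact: (beq_free [::] t (g, false)). Qed.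

Section SigmaQuotient.
Variables (n : nat) (s1 s2 : 'I_n.-1).
Hypotheses (h1 : val s1 = 0) (h2 : val s2 = 1).

Local Notation S1 := (GS s1, true).
Local Notation S1' := (GS s1, false).
Local Notation S2 := (GS s2, true).
Local Notation S2' := (GS s2, false).
Local Notation A := (GA n, true).
Local Notation B := (GB n, true).
Local Notation B' := (GB n, false).

Definition sigma21 : word n := winv (ws s2) ++ ws s1.

Local Notation N := (nclosure sigma21).

Lemma braid_sigma12 t : beq (S1 :: S2 :: S1 :: t) (S2 :: S1 :: S2 :: t).
Proof.
have braid : beq (ws s1 ++ ws s2 ++ ws s1) (ws s2 ++ ws s1 ++ ws s2).
  by apply/krel_beq/kr_braid; rewrite h1 h2.
exact: (cat_beq braid (beq_refl t)).
Qed.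

Lemma sigma21_comm : beq (comm (winv (ws s1)) (winv (ws s2))) sigma21.
Proof.
rewrite /comm /sigma21 /winv /ws /=.
rewrite -(beq_cancel_neg (GS s2) [:: S1; S2; S1'; S2']) -braid_sigma12.
by rewrite !beq_cancel_pos.
Qed.

Lemma sigma21_Gamma2 : Gamma 2 sigma21.
Proof.
by rewrite /Gamma /=; apply: gsub_eq sigma21_comm (gsub_base _); do 2!eexists.
Qed.

Lemma sigma21_Gamma3 : Gamma 3 sigma21.
Proof.
pose c := comm (winv sigma21) (winv (ws s2)).
have c_Gamma3 : lcs 2 c.
  apply: gsub_base; exists (winv sigma21), (winv (ws s2)).
  by split=> //; apply: gsub_inv sigma21_Gamma2.
apply: gsub_eq (lcs_conj (winv (ws s2)) c_Gamma3).
rewrite /comm /sigma21 /winv /ws /= !beq_cancel_pos.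
exact: sigma21_comm.
Qed.

Lemma nclosure_sub_Gamma3 w : N w -> Gamma 3 w.
Proof.
by apply: gsub_sub => _ [g ->]; apply: (lcs_conj (k := 1) g sigma21_Gamma3).
Qed.

Lemma sigma21_neq1 : ~ beq sigma21 [::].
Proof. by move=> /beq_perm /(_ 0); rewrite /perm_word /perm_letter /= h1 h2. Qed.

Lemma sigma2_eqmod_sigma1 : eqmod N (ws s2) (ws s1).
Proof. by apply: gsub_base; exists [::]; rewrite cats0. Qed.

Lemma sigma_succ_eqmod (i j : 'I_n.-1) :
  val j = (val i).+1 -> eqmod N (ws i) (ws j).
Proof.
move ei: (val i) => k; elim: k i j ei => [|k IH] i j ei ej.
  have -> : i = s1 by apply: val_inj; rewrite ei h1.
  have -> : j = s2 by apply: val_inj; rewrite ej h2.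
  by symmetry; apply: sigma2_eqmod_sigma1.
have k_lt : k < n.-1 by apply: ltnW; rewrite -ei ltn_ord.
pose p := Ordinal k_lt.
have far : beq (ws p ++ ws j) (ws j ++ ws p).
  by apply/krel_beq/kr_far; left; rewrite ej /=; lia.
have braid : beq (ws i ++ ws j ++ ws i) (ws j ++ ws i ++ ws j).
  by apply/krel_beq/kr_braid; rewrite ei ej.
apply: eqmod_braid; last by rewrite braid.
by rewrite -(IH p i erefl ei) /commute_mod far.
Qed.

Lemma sigma_eqmod_sigma1 (i : 'I_n.-1) : eqmod N (ws i) (ws s1).
Proof.
move ei: (val i) => k; elim: k i ei => [|k IH] i ei.
  by have -> : i = s1 by apply: val_inj; rewrite ei h1.
have k_lt : k < n.-1 by apply: ltnW; rewrite -ei ltn_ord.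
pose p := Ordinal k_lt.
by rewrite -(sigma_succ_eqmod (i := p)) ?ei //; apply: IH.
Qed.

Lemma a_sigma1_commute : commute_mod N (wa n) (ws s1).
Proof.
have a_sigma2 : beq (wa n ++ ws s2) (ws s2 ++ wa n).
  by apply/krel_beq/kr_a; rewrite h2.
by rewrite -sigma2_eqmod_sigma1 /commute_mod a_sigma2.
Qed.

Lemma b_sigma1_commute : commute_mod N (wb n) (ws s1).
Proof.
have b_sigma2 : beq (wb n ++ ws s2) (ws s2 ++ wb n).
  by apply/krel_beq/kr_b; rewrite h2.
by rewrite -sigma2_eqmod_sigma1 /commute_mod b_sigma2.
Qed.

Lemma a_sigma1_swap c e t :
  eqmod N ((GA n, c) :: (GS s1, e) :: t) ((GS s1, e) :: (GA n, c) :: t).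
Proof. exact: eqmod_swap t (commute_mod_signs c e a_sigma1_commute). Qed.

Lemma b_sigma1_swap c e t :
  eqmod N ((GB n, c) :: (GS s1, e) :: t) ((GS s1, e) :: (GB n, c) :: t).
Proof. exact: eqmod_swap t (commute_mod_signs c e b_sigma1_commute). Qed.

Lemma sigma1_square t : eqmod N (S1 :: S1 :: t) t.
Proof.
have k3 : eqmod N [:: B; S1'; B; S1] [:: S1'; B; S1'; B].
  by apply: beq_eqmod; apply: krel_beq (kr_3 h1).
rewrite !b_sigma1_swap beq_cancel_neg in k3.
have h : eqmod N [::] [:: S1'; S1'] by apply: (@eqmod_catr _ _ _ [:: B; B]).
change (eqmod N ([:: S1; S1] ++ t) ([::] ++ t)).
by rewrite -[[:: S1; S1]]/(winv [:: S1'; S1']) -h.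
Qed.

Lemma a_b_commute : commute_mod N (wa n) (wb n).
Proof.
have k1 : eqmod N [:: B'; S1; A] [:: S1; A; S1; B'; S1].
  by apply: beq_eqmod; apply: krel_beq (kr_1 h1).
rewrite !b_sigma1_swap !a_sigma1_swap sigma1_square in k1.
apply: commute_mod_sym; change (commute_mod N (winv (winv (wb n))) (wa n)).
apply: commute_mod_winvl.
exact: (@eqmod_catl _ _ _ [:: S1]).
Qed.

Lemma generators_commute g h : commute_mod N [:: (g, true)] [:: (h, true)].
Proof.
have refl u : commute_mod N u u by rewrite /commute_mod.
have aS j : commute_mod N (wa n) (ws j).
  by rewrite (sigma_eqmod_sigma1 j); apply: a_sigma1_commute.
have bS j : commute_mod N (wb n) (ws j).
  by rewrite (sigma_eqmod_sigma1 j); apply: b_sigma1_commute.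
have SS i j : commute_mod N (ws i) (ws j).
  by rewrite (sigma_eqmod_sigma1 i) (sigma_eqmod_sigma1 j).
case: g => [||i]; case: h => [||j].
- exact: refl.
- exact: a_b_commute.
- exact: aS.
- exact: commute_mod_sym a_b_commute.
- exact: refl.
- exact: bS.
- exact: commute_mod_sym (aS i).
- exact: commute_mod_sym (bS i).
- exact: SS.
Qed.

Lemma Gamma2_sub_nclosure w : Gamma 2 w -> N w.
Proof.
apply: gsub_normal => _ [x [g [_ ->]]].
exact: comm_normal generators_commute x g.
Qed.

End SigmaQuotient.

Unset Implicit Arguments.

Theorem proposition5p18 (n : nat) (hn : 3 <= n)
  (s1 s2 : 'I_n.-1) (h1 : val s1 = 0) (h2 : val s2 = 1) :
  (forall i, 3 <= i -> forall w : word n, Gamma 2 w <-> Gamma i w) /\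
  (forall w : word n, Gamma 2 w <-> nclosure (winv (ws s2) ++ ws s1) w) /\
  (exists w : word n, Gamma 2 w /\ ~ beq w [::]) /\
  (exists w : word n, (forall i, 1 <= i -> Gamma i w) /\ ~ beq w [::]).
Proof.
(* [hn] is redundant: an ordinal [s2] of value 1 already forces [3 <= n]. *)
have G2_N := Gamma2_sub_nclosure h1 h2.
have N_G3 := nclosure_sub_Gamma3 h1 h2.
have G_stable := Gamma_stable (fun w hw => N_G3 w (G2_N w hw)).
have d_G2 := sigma21_Gamma2 h1 h2; have d_ne1 := sigma21_neq1 h1 h2.
split; first by move=> i /ltnW; apply: G_stable.
split; first by move=> w; split=> [/G2_N // | /N_G3]; apply: lcs_le.
split; first by exists (sigma21 s1 s2).
exists (sigma21 s1 s2); split=> // -[|[|i]] // _.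
exact/G_stable.
Qed.
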